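(* Deciding whether a normal finitely recursive program $P$ skeptically entails a ground formula $F$ is r.e.-hard.
   Context: A normal program is a finite set of rules $A\leftarrow L_1,\dots,L_n$ ($n\ge0$), $A$ an atom, $L_i$ atoms or negated atoms $\mathtt{not}\,B$, possibly with function symbols. $\mathsf{Ground}(P)$ is its ground instantiation. For a set $M$ of ground atoms, $P^M$ is obtained from $\mathsf{Ground}(P)$ by deleting rules having some $\mathtt{not}\,B$ in the body with $B\in M$ and deleting negative literals from the remaining rules; $M$ is a stable model iff $M$ is the least Herbrand model of $P^M$. A ground formula is a closed propositional combination of ground atoms; $P$ skeptically entails $F$ iff $F$ is true in every stable model of $P$. The dependency graph has ground atoms as vertices and an edge $A\to B$ whenever some $r\in\mathsf{Ground}(P)$ has head $A$ and $B$ occurring in its body; $A$ depends on $B$ if there is a directed path from $A$ to $B$ (every atom depends on itself). $P$ is finitely recursive iff each ground atom depends on finitely many ground atoms. r.e.-hard means every recursively enumerable set is many-one reducible to the set of pairs $(P,F)$ with $P$ normal finitely recursive skeptically entailing $F$. *)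

From Stdlib Require Import List Arith Relations.
Import ListNotations.

(* Terms: variables and function symbols (name, arity = number of args);
   constants are Fun c []. *)
Inductive term : Type :=
| Var : nat -> term
| Fun : nat -> list term -> term.

Record atom : Type := mkAtom { apred : nat; aargs : list term }.

Inductive literal : Type :=
| Pos : atom -> literal
| Neg : atom -> literal.

Record rule : Type := mkRule { rhead : atom; rbody : list literal }.

Definition program := list rule.

Inductive formula : Type :=
| FAtom : atom -> formula
| FNot : formula -> formula
| FAnd : formula -> formula -> formula
| FOr : formula -> formula -> formula
| FImp : formula -> formula -> formula.

Fixpoint ground_term (t : term) : Prop :=
  match t with
  | Var _ => False
  | Fun _ ts => (fix all (l : list term) : Prop :=
                   match l with [] => True | u :: l' => ground_term u /\ all l' end) ts
  end.

Definition ground_atom (a : atom) : Prop := forall t, In t (aargs a) -> ground_term t.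

Fixpoint ground_formula (F : formula) : Prop :=
  match F with
  | FAtom a => ground_atom a
  | FNot G => ground_formula G
  | FAnd G H | FOr G H | FImp G H => ground_formula G /\ ground_formula H
  end.

Fixpoint subst_term (s : nat -> term) (t : term) : term :=
  match t with
  | Var x => s x
  | Fun f ts => Fun f (map (subst_term s) ts)
  end.

Definition subst_atom (s : nat -> term) (a : atom) : atom :=
  mkAtom (apred a) (map (subst_term s) (aargs a)).

Definition subst_lit (s : nat -> term) (l : literal) : literal :=
  match l with Pos a => Pos (subst_atom s a) | Neg a => Neg (subst_atom s a) end.

Definition subst_rule (s : nat -> term) (r : rule) : rule :=
  mkRule (subst_atom s (rhead r)) (map (subst_lit s) (rbody r)).

Fixpoint funs_term (t : term) : list (nat * nat) :=
  match t with
  | Var _ => []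
  | Fun f ts => (f, length ts) :: flat_map funs_term ts
  end.

Definition funs_atom (a : atom) : list (nat * nat) := flat_map funs_term (aargs a).
Definition lit_atom (l : literal) : atom := match l with Pos a => a | Neg a => a end.
Definition funs_rule (r : rule) : list (nat * nat) :=
  funs_atom (rhead r) ++ flat_map (fun l => funs_atom (lit_atom l)) (rbody r).
Definition funs_prog (P : program) : list (nat * nat) := flat_map funs_rule P.

(* Language of P: its function symbols, plus one constant (0, arity 0)
   if P contains no constant (standard convention). *)
Definition signature (P : program) : list (nat * nat) :=
  if existsb (fun p => Nat.eqb (snd p) 0) (funs_prog P)
  then funs_prog P else (0, 0) :: funs_prog P.

Fixpoint in_HU (sg : list (nat * nat)) (t : term) : Prop :=
  match t with
  | Var _ => False
  | Fun f ts => In (f, length ts) sg /\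
      (fix all (l : list term) : Prop :=
         match l with [] => True | u :: l' => in_HU sg u /\ all l' end) ts
  end.

Definition ground_rule_of (P : program) (gr : rule) : Prop :=
  exists r s, In r P /\ (forall x, in_HU (signature P) (s x)) /\ gr = subst_rule s r.

Definition interp := atom -> Prop.

(* S is closed under the rules of the reduct P^M *)
Definition reduct_closed (P : program) (M S : interp) : Prop :=
  forall gr, ground_rule_of P gr ->
    (forall B, In (Neg B) (rbody gr) -> ~ M B) ->
    (forall B, In (Pos B) (rbody gr) -> S B) ->
    S (rhead gr).

Definition least_model_reduct (P : program) (M : interp) : interp :=
  fun a => forall S, reduct_closed P M S -> S a.

Definition stable_model (P : program) (M : interp) : Prop :=
  forall a, M a <-> least_model_reduct P M a.

Fixpoint holds (M : interp) (F : formula) : Prop :=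
  match F with
  | FAtom a => M a
  | FNot G => ~ holds M G
  | FAnd G H => holds M G /\ holds M H
  | FOr G H => holds M G \/ holds M H
  | FImp G H => holds M G -> holds M H
  end.

Definition skeptically_entails (P : program) (F : formula) : Prop :=
  forall M, stable_model P M -> holds M F.

Definition dep_edge (P : program) (A B : atom) : Prop :=
  exists gr, ground_rule_of P gr /\ rhead gr = A /\ In B (map lit_atom (rbody gr)).

Definition depends (P : program) : atom -> atom -> Prop := clos_refl_trans atom (dep_edge P).

Definition finitely_recursive (P : program) : Prop :=
  forall A, ground_atom A -> exists l : list atom, forall B, depends P A B -> In B l.

Definition FR_skeptical (x : program * formula) : Prop :=
  finitely_recursive (fst x) /\ ground_formula (snd x) /\ skeptically_entails (fst x) (snd x).

Inductive mu_rec : Type :=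
| MZero : mu_rec
| MSucc : mu_rec
| MProj : nat -> mu_rec
| MComp : mu_rec -> list mu_rec -> mu_rec
| MRec : mu_rec -> mu_rec -> mu_rec    (* primitive recursion on the first argument *)
| MMin : mu_rec -> mu_rec.             (* unbounded minimisation on the first argument *)

Inductive eval : mu_rec -> list nat -> nat -> Prop :=
| ev_zero v : eval MZero v 0
| ev_succ v : eval MSucc v (S (hd 0 v))
| ev_proj i v : eval (MProj i) v (nth i v 0)
| ev_comp f gs v ys z : evals gs v ys -> eval f ys z -> eval (MComp f gs) v z
| ev_rec0 f g v y : eval f v y -> eval (MRec f g) (0 :: v) y
| ev_recS f g n v r y : eval (MRec f g) (n :: v) r -> eval g (n :: r :: v) y ->
    eval (MRec f g) (S n :: v) y
| ev_min f v n : eval f (n :: v) 0 ->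
    (forall m, m < n -> exists k, k <> 0 /\ eval f (m :: v) k) ->
    eval (MMin f) v n
with evals : list mu_rec -> list nat -> list nat -> Prop :=
| evs_nil v : evals [] v []
| evs_cons g gs v y ys : eval g v y -> evals gs v ys -> evals (g :: gs) v (y :: ys).

Definition re_set (A : nat -> Prop) : Prop :=
  exists c : mu_rec, forall n, A n <-> exists y, eval c [n] y.

Definition cpair (x y : nat) : nat := (x + y) * (x + y + 1) / 2 + y.

Fixpoint enc_list (l : list nat) : nat :=
  match l with [] => 0 | x :: l' => S (cpair x (enc_list l')) end.

Fixpoint enc_term (t : term) : nat :=
  match t with
  | Var x => cpair 0 x
  | Fun f ts => cpair 1 (cpair f (enc_list (map enc_term ts)))
  end.

Definition enc_atom (a : atom) : nat := cpair (apred a) (enc_list (map enc_term (aargs a))).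
Definition enc_lit (l : literal) : nat :=
  match l with Pos a => cpair 0 (enc_atom a) | Neg a => cpair 1 (enc_atom a) end.
Definition enc_rule (r : rule) : nat := cpair (enc_atom (rhead r)) (enc_list (map enc_lit (rbody r))).
Definition enc_program (P : program) : nat := enc_list (map enc_rule P).

Fixpoint enc_formula (F : formula) : nat :=
  match F with
  | FAtom a => cpair 0 (enc_atom a)
  | FNot G => cpair 1 (enc_formula G)
  | FAnd G H => cpair 2 (cpair (enc_formula G) (enc_formula H))
  | FOr G H => cpair 3 (cpair (enc_formula G) (enc_formula H))
  | FImp G H => cpair 4 (cpair (enc_formula G) (enc_formula H))
  end.

Definition enc_instance (x : program * formula) : nat :=
  cpair (enc_program (fst x)) (enc_formula (snd x)).

Definition many_one_reducible (A : nat -> Prop) (B : program * formula -> Prop) : Prop :=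
  exists f : nat -> program * formula,
    (exists c : mu_rec, forall n, eval c [n] (enc_instance (f n))) /\
    (forall n, A n <-> B (f n)).

(* Reduction from the halting problem for partial recursive functions.  Given a code c and an
   input n, the program consists of an interpreter for mu-recursive functions, deriving
   eval(node(c', v, y, K)) exactly when c' maps v to y, together with the single rule

       p(X) :- not p(X), eval(X)          where X = node(c, [n], Y, K).

   If c halts on n, some instance of eval(X) is derivable in every reduct and this odd loop
   through negation kills every stable model, so the contradiction a /\ ~a is skeptically
   entailed.  If c diverges, no p-atom is derivable, so the least model of the negation-free
   part is stable and falsifies a /\ ~a.
   The program is finitely recursive because the last argument K of an eval atom records the
   whole evaluation tree: every body atom of a rule is built from subterms of the arguments of
   its head, so a ground atom depends on finitely many atoms only. *)

From Stdlib Require Import List Arith Lia Relations Classical.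
Import ListNotations.

(** * Stable models and finite recursion *)

Section TermInd.
Variable P : term -> Prop.
Hypothesis P_var : forall x, P (Var x).
Hypothesis P_fun : forall f ts, Forall P ts -> P (Fun f ts).
Fixpoint term_nested_ind (t : term) : P t :=
  match t with
  | Var x => P_var x
  | Fun f ts => P_fun f ts
      ((fix go (l : list term) : Forall P l :=
         match l with
         | [] => Forall_nil _
         | u :: l' => Forall_cons _ (term_nested_ind u) (go l')
         end) ts)
  end.
End TermInd.

Lemma least_model_reduct_rule P M r s :
  In r P -> (forall x, in_HU (signature P) (s x)) ->
  (forall B, In (Neg B) (rbody (subst_rule s r)) -> ~ M B) ->
  (forall B, In (Pos B) (rbody (subst_rule s r)) -> least_model_reduct P M B) ->
  least_model_reduct P M (rhead (subst_rule s r)).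
Proof.
  intros Hr Hs Hneg Hpos S HS.
  apply HS; [exists r, s; auto | exact Hneg | intros B HB; exact (Hpos B HB S HS)].
Qed.

Lemma reduct_closed_ext P M M' S :
  (forall gr B, ground_rule_of P gr -> In (Neg B) (rbody gr) -> ~ M' B -> ~ M B) ->
  reduct_closed P M S -> reduct_closed P M' S.
Proof. intros HMM' HS gr Hgr Hneg. apply HS; eauto. Qed.

Lemma stable_least_model_of_positive_part P :
  let M0 := least_model_reduct P (fun _ => False) in
  (forall gr B, ground_rule_of P gr -> In (Neg B) (rbody gr) -> ~ M0 B) ->
  stable_model P M0.
Proof.
  intros M0 Hneg a; split; intros Ha S HS; apply Ha.
  - apply (reduct_closed_ext P M0); [intros gr B Hgr HB _; exact (Hneg gr B Hgr HB) | exact HS].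
  - apply (reduct_closed_ext P (fun _ => False)); [tauto | exact HS].
Qed.

Lemma odd_loop_not_stable P M q :
  (forall gr, ground_rule_of P gr -> rhead gr = q -> In (Neg q) (rbody gr)) ->
  (~ M q -> least_model_reduct P M q) ->
  ~ stable_model P M.
Proof.
  intros Hloop Hder HM.
  assert (Hq : ~ M q).
  { intros Hq. apply (proj1 (HM q) Hq (fun a => a <> q)); auto.
    intros gr Hgr Hneg _ Heq. exact (Hneg q (Hloop gr Hgr Heq) Hq). }
  exact (Hq (proj2 (HM q) (Hder Hq))).
Qed.

Fixpoint subterms (t : term) : list term :=
  t :: match t with Var _ => [] | Fun _ ts => flat_map subterms ts end.

Definition arg_subterms (a : atom) : list term := flat_map subterms (aargs a).

Lemma subterms_refl t : In t (subterms t).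
Proof. destruct t; simpl; auto. Qed.

Lemma subterms_trans u t w : In u (subterms t) -> In t (subterms w) -> In u (subterms w).
Proof.
  induction w as [x|f ws IH] using term_nested_ind; simpl; intros Hu [<-|Hw];
    try solve [exact Hu | contradiction].
  right. rewrite Forall_forall in IH. apply in_flat_map in Hw as [w' [Hw' Ht]].
  apply in_flat_map. eauto.
Qed.

Lemma subterms_subst s u t : In u (subterms t) -> In (subst_term s u) (subterms (subst_term s t)).
Proof.
  revert u; induction t as [x|f ts IH] using term_nested_ind; intros u [<-|Hu];
    try solve [apply subterms_refl | contradiction].
  rewrite Forall_forall in IH. apply in_flat_map in Hu as [t' [Ht' Hu]].
  simpl. right. apply in_flat_map. exists (subst_term s t'). split; [apply in_map|]; auto.
Qed.

Definition body_bounded (k : nat) (r : rule) : Prop :=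
  forall l, In l (rbody r) ->
    apred (lit_atom l) < k /\ length (aargs (lit_atom l)) < k /\
    incl (aargs (lit_atom l)) (arg_subterms (rhead r)).

Lemma dep_edge_bounded k P A B :
  (forall r, In r P -> body_bounded k r) -> dep_edge P A B ->
  apred B < k /\ length (aargs B) < k /\ incl (aargs B) (arg_subterms A).
Proof.
  intros Hbd [gr [[r [s [Hr [_ ->]]]] [<- HB]]].
  cbn in HB. rewrite map_map in HB. apply in_map_iff in HB as [l [<- Hl]].
  destruct (Hbd r Hr l Hl) as [Hp [Hlen Hsub]].
  assert (E : lit_atom (subst_lit s l) = subst_atom s (lit_atom l)) by (destruct l; reflexivity).
  rewrite E; cbn. rewrite length_map. repeat split; auto.
  intros u Hu. apply in_map_iff in Hu as [u0 [<- Hu0]].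
  apply Hsub, in_flat_map in Hu0 as [w [Hw Hu0]].
  apply in_flat_map. exists (subst_term s w). split; [apply in_map | apply subterms_subst]; auto.
Qed.

Fixpoint words {X} (k : nat) (L : list X) : list (list X) :=
  match k with 0 => [[]] | S k => flat_map (fun x => map (cons x) (words k L)) L end.

Lemma words_complete {X} (L : list X) w : incl w L -> In w (words (length w) L).
Proof.
  induction w as [|x w IH]; simpl; intros H; auto.
  apply in_flat_map. exists x. split; [apply H; simpl; auto|].
  apply in_map, IH. intros u Hu. apply H. simpl; auto.
Qed.

Lemma finitely_recursive_of_body_bounded k P :
  (forall r, In r P -> body_bounded k r) -> finitely_recursive P.
Proof.
  intros Hbd A _.
  set (L := arg_subterms A).
  exists (A :: flat_map (fun p => flat_map (fun m => map (mkAtom p) (words m L)) (seq 0 k)) (seq 0 k)).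
  intros B HB. apply clos_rt_rtn1 in HB.
  assert (Hargs : incl (aargs B) L).
  { induction HB as [|B' B Hedge _ IH].
    - intros u Hu. apply in_flat_map. eauto using subterms_refl.
    - destruct (dep_edge_bounded k P _ _ Hbd Hedge) as [_ [_ Hsub]].
      intros u Hu. apply Hsub, in_flat_map in Hu as [w [Hw Hu]].
      apply IH, in_flat_map in Hw as [a [Ha Hw]].
      apply in_flat_map. eauto using subterms_trans. }
  destruct HB as [|B' B Hedge _]; [left; auto|right].
  destruct (dep_edge_bounded k P _ _ Hbd Hedge) as [Hp [Hlen _]].
  apply in_flat_map. exists (apred B). split; [apply in_seq; lia|].
  apply in_flat_map. exists (length (aargs B)). split; [apply in_seq; lia|].
  destruct B as [p args]. apply in_map, words_complete, Hargs.
Qed.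

(** * An interpreter for mu-recursive functions *)

Section MuRecInd.
Variable P : mu_rec -> Prop.
Hypothesis P_zero : P MZero.
Hypothesis P_succ : P MSucc.
Hypothesis P_proj : forall i, P (MProj i).
Hypothesis P_comp : forall f gs, P f -> Forall P gs -> P (MComp f gs).
Hypothesis P_rec : forall f g, P f -> P g -> P (MRec f g).
Hypothesis P_min : forall f, P f -> P (MMin f).
Fixpoint mu_rec_nested_ind (c : mu_rec) : P c :=
  match c with
  | MZero => P_zero
  | MSucc => P_succ
  | MProj i => P_proj i
  | MComp f gs => P_comp f gs (mu_rec_nested_ind f)
      ((fix go (l : list mu_rec) : Forall P l :=
         match l with
         | [] => Forall_nil _
         | g :: l' => Forall_cons _ (mu_rec_nested_ind g) (go l')
         end) gs)
  | MRec f g => P_rec f g (mu_rec_nested_ind f) (mu_rec_nested_ind g)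
  | MMin f => P_min f (mu_rec_nested_ind f)
  end.
End MuRecInd.

Notation t_zero := (Fun 0 []).
Notation t_succ t := (Fun 1 [t]).
Notation t_nil := (Fun 2 []).
Notation t_cons a b := (Fun 3 [a; b]).
(* [t_node c v y K]: the code [c] maps the input list [v] to [y], and [K] lists the nodes of
   the subcomputations. *)
Notation t_node c v y k := (Fun 10 [c; v; y; k]).

Fixpoint list_term (l : list term) : term :=
  match l with [] => t_nil | x :: l' => t_cons x (list_term l') end.

Fixpoint num_term (n : nat) : term :=
  match n with 0 => t_zero | S n => t_succ (num_term n) end.

Definition nats_term (v : list nat) : term := list_term (map num_term v).

Fixpoint code_term (c : mu_rec) : term :=
  match c with
  | MZero => Fun 4 []
  | MSucc => Fun 5 []
  | MProj i => Fun 6 [num_term i]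
  | MComp f gs => Fun 7 [code_term f; list_term (map code_term gs)]
  | MRec f g => Fun 8 [code_term f; code_term g]
  | MMin f => Fun 9 [code_term f]
  end.

Definition codes_term (gs : list mu_rec) : term := list_term (map code_term gs).

Fixpoint decode_num (t : term) : nat :=
  match t with Fun 1 [u] => S (decode_num u) | _ => 0 end.

Fixpoint decode_nats (t : term) : list nat :=
  match t with Fun 3 [x; l] => decode_num x :: decode_nats l | _ => [] end.

Fixpoint decode_code (t : term) : mu_rec :=
  match t with
  | Fun 5 [] => MSucc
  | Fun 6 [i] => MProj (decode_num i)
  | Fun 7 [f; gs] => MComp (decode_code f) (decode_codes gs)
  | Fun 8 [f; g] => MRec (decode_code f) (decode_code g)
  | Fun 9 [f] => MMin (decode_code f)
  | _ => MZero
  end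
with decode_codes (t : term) : list mu_rec :=
  match t with Fun 3 [g; gs] => decode_code g :: decode_codes gs | _ => [] end.

Lemma decode_num_term n : decode_num (num_term n) = n.
Proof. induction n; simpl; congruence. Qed.

Lemma decode_code_term c : decode_code (code_term c) = c.
Proof.
  induction c as [| |i|f gs IHf IHgs|f g IHf IHg|f IHf] using mu_rec_nested_ind;
    simpl; rewrite ?decode_num_term; try congruence.
  rewrite IHf. f_equal. induction IHgs; simpl; f_equal; auto.
Qed.

Lemma subst_num_term s n : subst_term s (num_term n) = num_term n.
Proof. induction n; simpl; congruence. Qed.

Lemma subst_code_term s c : subst_term s (code_term c) = code_term c.
Proof.
  induction c as [| |i|f gs IHf IHgs|f g IHf IHg|f IHf] using mu_rec_nested_ind;
    simpl; rewrite ?subst_num_term; try congruence.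
  rewrite IHf. do 3 f_equal. induction IHgs; simpl; congruence.
Qed.

Notation eval_atom t := (mkAtom 0 [t]).
Notation evals_atom gs v ys tr := (mkAtom 1 [gs; v; ys; tr]).
Notation nth_atom i v x := (mkAtom 2 [i; v; x]).
Notation nonzero_below_atom f v n tr := (mkAtom 3 [f; v; n; tr]).
Notation halt_atom t := (mkAtom 4 [t]).

Definition rule_zero := mkRule (eval_atom (t_node (Fun 4 []) (Var 0) t_zero t_nil)) [].
Definition rule_succ :=
  mkRule (eval_atom (t_node (Fun 5 []) (t_cons (Var 0) (Var 1)) (t_succ (Var 0)) t_nil)) [].
Definition rule_succ_nil := mkRule (eval_atom (t_node (Fun 5 []) t_nil (t_succ t_zero) t_nil)) [].
Definition rule_proj :=
  mkRule (eval_atom (t_node (Fun 6 [Var 0]) (Var 1) (Var 2) t_nil))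
    [Pos (nth_atom (Var 0) (Var 1) (Var 2))].
Definition rule_nth_head := mkRule (nth_atom t_zero (t_cons (Var 0) (Var 1)) (Var 0)) [].
Definition rule_nth_tail :=
  mkRule (nth_atom (t_succ (Var 0)) (t_cons (Var 1) (Var 2)) (Var 3))
    [Pos (nth_atom (Var 0) (Var 2) (Var 3))].
(* Out-of-range projections yield 0, as in [ev_proj]. *)
Definition rule_nth_nil := mkRule (nth_atom (Var 0) t_nil t_zero) [].
Definition rule_comp :=
  mkRule (eval_atom (t_node (Fun 7 [Var 0; Var 1]) (Var 2) (Var 3)
                       (t_cons (t_node (Var 0) (Var 4) (Var 3) (Var 5)) (Var 6))))
    [Pos (eval_atom (t_node (Var 0) (Var 4) (Var 3) (Var 5)));
     Pos (evals_atom (Var 1) (Var 2) (Var 4) (Var 6))].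
Definition rule_evals_nil := mkRule (evals_atom t_nil (Var 0) t_nil t_nil) [].
Definition rule_evals_cons :=
  mkRule (evals_atom (t_cons (Var 0) (Var 1)) (Var 2) (t_cons (Var 3) (Var 4))
            (t_cons (t_node (Var 0) (Var 2) (Var 3) (Var 5)) (Var 6)))
    [Pos (eval_atom (t_node (Var 0) (Var 2) (Var 3) (Var 5)));
     Pos (evals_atom (Var 1) (Var 2) (Var 4) (Var 6))].
Definition rule_rec_zero :=
  mkRule (eval_atom (t_node (Fun 8 [Var 0; Var 1]) (t_cons t_zero (Var 2)) (Var 3)
                       (t_cons (t_node (Var 0) (Var 2) (Var 3) (Var 4)) t_nil)))
    [Pos (eval_atom (t_node (Var 0) (Var 2) (Var 3) (Var 4)))].
Definition rule_rec_succ :=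
  mkRule (eval_atom (t_node (Fun 8 [Var 0; Var 1]) (t_cons (t_succ (Var 2)) (Var 3)) (Var 4)
    (t_cons (t_node (Fun 8 [Var 0; Var 1]) (t_cons (Var 2) (Var 3)) (Var 5) (Var 6))
      (t_cons (t_node (Var 1) (t_cons (Var 2) (t_cons (Var 5) (Var 3))) (Var 4) (Var 7)) t_nil))))
    [Pos (eval_atom (t_node (Fun 8 [Var 0; Var 1]) (t_cons (Var 2) (Var 3)) (Var 5) (Var 6)));
     Pos (eval_atom (t_node (Var 1) (t_cons (Var 2) (t_cons (Var 5) (Var 3))) (Var 4) (Var 7)))].
Definition rule_min :=
  mkRule (eval_atom (t_node (Fun 9 [Var 0]) (Var 1) (Var 2)
                       (t_cons (t_node (Var 0) (t_cons (Var 2) (Var 1)) t_zero (Var 3)) (Var 4))))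
    [Pos (eval_atom (t_node (Var 0) (t_cons (Var 2) (Var 1)) t_zero (Var 3)));
     Pos (nonzero_below_atom (Var 0) (Var 1) (Var 2) (Var 4))].
Definition rule_nonzero_below_zero := mkRule (nonzero_below_atom (Var 0) (Var 1) t_zero t_nil) [].
Definition rule_nonzero_below_succ :=
  mkRule (nonzero_below_atom (Var 0) (Var 1) (t_succ (Var 2))
            (t_cons (t_node (Var 0) (t_cons (Var 2) (Var 1)) (t_succ (Var 3)) (Var 4)) (Var 5)))
    [Pos (eval_atom (t_node (Var 0) (t_cons (Var 2) (Var 1)) (t_succ (Var 3)) (Var 4)));
     Pos (nonzero_below_atom (Var 0) (Var 1) (Var 2) (Var 5))].

Definition interpreter : program :=
  [rule_zero; rule_succ; rule_succ_nil; rule_proj; rule_nth_head; rule_nth_tail; rule_nth_nil;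
   rule_comp; rule_evals_nil; rule_evals_cons; rule_rec_zero; rule_rec_succ; rule_min;
   rule_nonzero_below_zero; rule_nonzero_below_succ].

Definition meaning (a : atom) : Prop :=
  match a with
  | eval_atom (t_node c v y _) => eval (decode_code c) (decode_nats v) (decode_num y)
  | evals_atom gs v ys _ => evals (decode_codes gs) (decode_nats v) (decode_nats ys)
  | nth_atom i v x => nth (decode_num i) (decode_nats v) 0 = decode_num x
  | nonzero_below_atom f v n _ =>
      forall m, m < decode_num n -> exists k, k <> 0 /\ eval (decode_code f) (m :: decode_nats v) k
  | _ => True
  end.

Lemma pos_body_cons (S : atom -> Prop) B l :
  (forall B', In (Pos B') (Pos B :: l) -> S B') -> S B /\ (forall B', In (Pos B') l -> S B').
Proof. intros H. split; [apply H; left | intros B' HB; apply H; right]; auto. Qed.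

Ltac split_pos_body H :=
  repeat (apply pos_body_cons in H; let HB := fresh "HB" in destruct H as [HB H]).

Lemma interpreter_sound r s :
  In r interpreter ->
  (forall B, In (Pos B) (rbody (subst_rule s r)) -> meaning B) ->
  meaning (rhead (subst_rule s r)).
Proof.
  intros Hr Hpos. simpl in Hr.
  repeat destruct Hr as [<-|Hr]; try contradiction;
  cbn [rbody rhead subst_rule map subst_lit] in Hpos |- *;
  split_pos_body Hpos; cbn in *;
  try solve [auto | constructor; auto | econstructor; eauto].
  - rewrite <- HB. constructor.
  - now destruct (decode_num (s 0)).
  - intros m Hm. lia.
  - intros m Hm. destruct (Nat.eq_dec m (decode_num (s 2))) as [->|Hne].
    + exists (S (decode_num (s 3))). auto.
    + apply HB0. lia.
Qed.

(** * Derivations in the interpreter *)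

Definition interpreter_symbols : list (nat * nat) :=
  [(0,0); (1,1); (2,0); (3,2); (4,0); (5,0); (6,1); (7,2); (8,2); (9,1); (10,4)].

Lemma interpreter_symbols_used : incl interpreter_symbols (funs_prog interpreter).
Proof.
  intros x Hx. simpl in Hx.
  repeat destruct Hx as [<-|Hx]; try contradiction;
  vm_compute; repeat (first [left; reflexivity | right]).
Qed.

Lemma funs_prog_incl P Q : incl P Q -> incl (funs_prog P) (funs_prog Q).
Proof.
  intros HPQ x Hx. apply in_flat_map in Hx as [r [Hr Hx]]. apply in_flat_map. eauto.
Qed.

Lemma funs_prog_signature P : incl (funs_prog P) (signature P).
Proof. unfold signature. destruct existsb; intros x Hx; simpl; auto. Qed.

Section Completeness.
Variables (P : program) (M : interp).
Hypothesis P_interpreter : incl interpreter P.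

Local Notation HU := (in_HU (signature P)).

Lemma interpreter_symbols_signature x : In x interpreter_symbols -> In x (signature P).
Proof.
  intros Hx. apply funs_prog_signature, (funs_prog_incl _ _ P_interpreter), interpreter_symbols_used, Hx.
Qed.

Ltac symbol := apply interpreter_symbols_signature; simpl; tauto.

Lemma HU_zero : HU t_zero. Proof. split; [symbol | exact I]. Qed.
Lemma HU_nil : HU t_nil. Proof. split; [symbol | exact I]. Qed.
Lemma HU_succ t : HU t -> HU (t_succ t). Proof. split; [symbol | simpl; auto]. Qed.
Lemma HU_cons a b : HU a -> HU b -> HU (t_cons a b). Proof. split; [symbol | simpl; auto]. Qed.
Lemma HU_node a b d e : HU a -> HU b -> HU d -> HU e -> HU (t_node a b d e).
Proof. split; [symbol | simpl; auto]. Qed.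

Lemma HU_num_term n : HU (num_term n).
Proof. induction n; [apply HU_zero | apply HU_succ; auto]. Qed.

Lemma HU_list_term l : Forall HU l -> HU (list_term l).
Proof. induction 1; [apply HU_nil | apply HU_cons; auto]. Qed.

Lemma HU_nats_term v : HU (nats_term v).
Proof.
  apply HU_list_term, Forall_forall. intros t Ht.
  apply in_map_iff in Ht as [n [<- _]]. apply HU_num_term.
Qed.

Lemma HU_code_term c : HU (code_term c).
Proof.
  induction c as [| |i|f gs IHf IHgs|f g IHf IHg|f IHf] using mu_rec_nested_ind;
    simpl; repeat split; auto; try symbol; try apply HU_num_term.
  apply HU_list_term. induction IHgs; constructor; auto.
Qed.

Lemma HU_codes_term gs : HU (codes_term gs).
Proof.
  apply HU_list_term, Forall_forall. intros t Ht.
  apply in_map_iff in Ht as [c [<- _]]. apply HU_code_term.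
Qed.

Definition list_subst (l : list term) (x : nat) : term := nth x l t_zero.

Lemma HU_list_subst l : Forall HU l -> forall x, HU (list_subst l x).
Proof.
  intros Hl x. unfold list_subst. revert x.
  induction Hl as [|t l Ht _ IH]; intros [|x]; [apply HU_zero | apply HU_zero | exact Ht | apply IH].
Qed.

Ltac HU_term :=
  repeat lazymatch goal with
  | |- HU (num_term _) => apply HU_num_term
  | |- HU (nats_term _) => apply HU_nats_term
  | |- HU (code_term _) => apply HU_code_term
  | |- HU (codes_term _) => apply HU_codes_term
  | |- HU t_zero => apply HU_zero
  | |- HU t_nil => apply HU_nil
  | |- HU (t_succ _) => apply HU_succ
  | |- HU (t_cons _ _) => apply HU_cons
  | |- HU (t_node _ _ _ _) => apply HU_node
  | |- HU _ => assumption
  end.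

Let LM := least_model_reduct P M.

(* [l] lists the values of the rule variables [Var 0], [Var 1], ... *)
Ltac fire r l :=
  refine (least_model_reduct_rule P M r (list_subst l) _ _ _ _);
  [ apply P_interpreter; simpl; tauto
  | apply HU_list_subst; repeat (constructor; [HU_term|]); constructor
  | intros B HB; simpl in HB; repeat destruct HB as [HB|HB]; discriminate || contradiction
  | intros B HB; simpl in HB; repeat destruct HB as [HB|HB]; try contradiction;
    injection HB as <-; assumption ].

Lemma derive_nth i v : LM (nth_atom (num_term i) (nats_term v) (num_term (nth i v 0))).
Proof.
  revert i; induction v as [|x v IH]; intros [|i].
  - fire rule_nth_nil [num_term 0].
  - fire rule_nth_nil [num_term (S i)].
  - fire rule_nth_head [num_term x; nats_term v].
  - pose proof (IH i). fire rule_nth_tail [num_term i; num_term x; nats_term v; num_term (nth i v 0)].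
Qed.

Lemma derive_nonzero_below f v n :
  (forall m, m < n -> exists y K, HU K /\
     LM (eval_atom (t_node (code_term f) (t_cons (num_term m) (nats_term v)) (num_term (S y)) K))) ->
  exists K, HU K /\ LM (nonzero_below_atom (code_term f) (nats_term v) (num_term n) K).
Proof.
  induction n as [|n IH]; intros Hbelow.
  - exists t_nil. split; [HU_term|]. fire rule_nonzero_below_zero [code_term f; nats_term v].
  - destruct IH as [K [HK HLM]]; [intros; apply Hbelow; lia|].
    destruct (Hbelow n ltac:(lia)) as [y [K' [HK' HLM']]].
    exists (t_cons (t_node (code_term f) (t_cons (num_term n) (nats_term v)) (num_term (S y)) K') K).
    split; [HU_term|].
    fire rule_nonzero_below_succ [code_term f; nats_term v; num_term n; num_term y; K'; K].
Qed.

(* Structural recursion on the evaluation derivation; unlike the generated induction scheme,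
   it also reaches the evaluations hidden under the side condition of [ev_min]. *)
Fixpoint derive_eval c v y (H : eval c v y) {struct H} :
  exists K, HU K /\ LM (eval_atom (t_node (code_term c) (nats_term v) (num_term y) K))
with derive_evals gs v ys (H : evals gs v ys) {struct H} :
  exists K, HU K /\ LM (evals_atom (codes_term gs) (nats_term v) (nats_term ys) K).
Proof.
  - destruct H as [v|v|i v|f gs v ys z Hgs Hf|f g v y Hf|f g n v r y Hrec Hg|f v n Hf Hbelow].
    + exists t_nil. split; [HU_term|]. fire rule_zero [nats_term v].
    + exists t_nil. split; [HU_term|]. destruct v as [|x v].
      * fire rule_succ_nil (@nil term).
      * fire rule_succ [num_term x; nats_term v].
    + exists t_nil. split; [HU_term|]. pose proof (derive_nth i v).
      fire rule_proj [num_term i; nats_term v; num_term (nth i v 0)].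
    + destruct (derive_evals _ _ _ Hgs) as [Kgs [HKgs HLMgs]].
      destruct (derive_eval _ _ _ Hf) as [Kf [HKf HLMf]].
      exists (t_cons (t_node (code_term f) (nats_term ys) (num_term z) Kf) Kgs).
      split; [HU_term|].
      fire rule_comp [code_term f; codes_term gs; nats_term v; num_term z; nats_term ys; Kf; Kgs].
    + destruct (derive_eval _ _ _ Hf) as [K [HK HLM]].
      exists (t_cons (t_node (code_term f) (nats_term v) (num_term y) K) t_nil).
      split; [HU_term|].
      fire rule_rec_zero [code_term f; code_term g; nats_term v; num_term y; K].
    + destruct (derive_eval _ _ _ Hrec) as [K1 [HK1 HLM1]].
      destruct (derive_eval _ _ _ Hg) as [K2 [HK2 HLM2]].
      exists (t_cons (t_node (code_term (MRec f g)) (t_cons (num_term n) (nats_term v)) (num_term r) K1)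
               (t_cons (t_node (code_term g) (t_cons (num_term n) (t_cons (num_term r) (nats_term v)))
                          (num_term y) K2) t_nil)).
      split; [HU_term|].
      fire rule_rec_succ
        [code_term f; code_term g; num_term n; nats_term v; num_term y; num_term r; K1; K2].
    + destruct (derive_eval _ _ _ Hf) as [K [HK HLM]].
      destruct (derive_nonzero_below f v n) as [Kb [HKb HLMb]].
      { intros m Hm. destruct (Hbelow m Hm) as [[|y] [Hy Hm']]; [congruence|].
        destruct (derive_eval _ _ _ Hm') as [K' [HK' HLM']]. eauto. }
      exists (t_cons (t_node (code_term f) (t_cons (num_term n) (nats_term v)) t_zero K) Kb).
      split; [HU_term|].
      fire rule_min [code_term f; nats_term v; num_term n; K; Kb].
  - destruct H as [v|g gs v y ys Hg Hgs].
    + exists t_nil. split; [HU_term|]. fire rule_evals_nil [nats_term v].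
    + destruct (derive_eval _ _ _ Hg) as [K [HK HLM]].
      destruct (derive_evals _ _ _ Hgs) as [Kgs [HKgs HLMgs]].
      exists (t_cons (t_node (code_term g) (nats_term v) (num_term y) K) Kgs).
      split; [HU_term|].
      fire rule_evals_cons [code_term g; codes_term gs; nats_term v; num_term y; nats_term ys; K; Kgs].
Qed.
End Completeness.

(** * The reduction *)

Definition halt_rule_at (code input : term) : rule :=
  let root := t_node code (t_cons input t_nil) (Var 0) (Var 1) in
  mkRule (halt_atom root) [Neg (halt_atom root); Pos (eval_atom root)].

Definition reduction_program (c : mu_rec) (n : nat) : program :=
  halt_rule_at (code_term c) (num_term n) :: interpreter.

Definition falsum : formula := FAnd (FAtom (mkAtom 5 [])) (FNot (FAtom (mkAtom 5 []))).

Definition halts (c : mu_rec) (n : nat) : Prop := exists y, eval c [n] y.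

Lemma halt_rule_instance c n s :
  let root := t_node (code_term c) (nats_term [n]) (s 0) (s 1) in
  subst_rule s (halt_rule_at (code_term c) (num_term n)) =
  mkRule (halt_atom root) [Neg (halt_atom root); Pos (eval_atom root)].
Proof.
  unfold halt_rule_at, subst_rule, subst_lit, subst_atom. cbn.
  now rewrite subst_code_term, subst_num_term.
Qed.

Lemma interpreter_head_pred r s : In r interpreter -> apred (rhead (subst_rule s r)) <> 4.
Proof. intros Hr. simpl in Hr. repeat destruct Hr as [<-|Hr]; try contradiction; discriminate. Qed.

Lemma interpreter_body_positive r s B : In r interpreter -> ~ In (Neg B) (rbody (subst_rule s r)).
Proof.
  intros Hr. simpl in Hr.
  repeat destruct Hr as [<-|Hr]; try contradiction; simpl; intros HB;
  repeat destruct HB as [HB|HB]; discriminate || contradiction.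
Qed.

Lemma interpreter_body_bounded r : In r interpreter -> body_bounded 5 r.
Proof.
  intros Hr l Hl. simpl in Hr.
  repeat destruct Hr as [<-|Hr]; try contradiction; simpl in Hl;
  repeat destruct Hl as [<-|Hl]; try contradiction; simpl; (split; [lia|split; [lia|]]);
  intros u Hu; simpl in Hu; repeat destruct Hu as [<-|Hu]; try contradiction;
  repeat (first [left; reflexivity | right]).
Qed.

Lemma halt_rule_at_body_bounded code input : body_bounded 5 (halt_rule_at code input).
Proof.
  intros l [<-|[<-|[]]]; cbn; (split; [lia|split; [lia|]]);
    intros u [<-|[]]; rewrite app_nil_r; apply subterms_refl.
Qed.

Lemma reduction_program_finitely_recursive c n : finitely_recursive (reduction_program c n).
Proof.
  apply (finitely_recursive_of_body_bounded 5). intros r [<-|Hr].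
  - apply halt_rule_at_body_bounded.
  - apply interpreter_body_bounded, Hr.
Qed.

Lemma reduction_program_sound c n M :
  reduct_closed (reduction_program c n) M (fun a => meaning a /\ (apred a = 4 -> halts c n)).
Proof.
  intros gr [r [s [[<-|Hr] [_ ->]]]] _ Hpos.
  - rewrite halt_rule_instance in Hpos |- *. split; [exact I|].
    intros _. destruct (Hpos _ (or_intror (or_introl eq_refl))) as [Heval _].
    cbn in Heval. rewrite decode_code_term, decode_num_term in Heval. eexists; exact Heval.
  - split.
    + apply interpreter_sound; auto. intros B HB. apply (Hpos B HB).
    + intros H4. exfalso. exact (interpreter_head_pred r s Hr H4).
Qed.

Lemma halts_no_stable_model c n M : halts c n -> ~ stable_model (reduction_program c n) M.
Proof.
  intros [y Hy].
  assert (HP : incl interpreter (reduction_program c n)) by (intros r Hr; right; exact Hr).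
  destruct (derive_eval (reduction_program c n) M HP c [n] y Hy) as [K [HK Heval]].
  set (root := t_node (code_term c) (nats_term [n]) (num_term y) K).
  apply (odd_loop_not_stable _ _ (halt_atom root)).
  - intros gr [r [s [[<-|Hr] [_ ->]]]] Hhead.
    + rewrite halt_rule_instance in Hhead |- *. cbn in Hhead |- *. rewrite Hhead. left; reflexivity.
    + exfalso. apply (interpreter_head_pred r s Hr). now rewrite Hhead.
  - intros Hroot.
    replace (halt_atom root)
      with (rhead (subst_rule (list_subst [num_term y; K]) (halt_rule_at (code_term c) (num_term n))))
      by now rewrite halt_rule_instance.
    apply least_model_reduct_rule; [left; reflexivity | | |].
    + apply HU_list_subst; [exact HP|]. repeat constructor; [apply HU_num_term; exact HP | exact HK].
    + rewrite halt_rule_instance. intros B [HB|[HB|[]]]; [|discriminate].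
      injection HB as <-. exact Hroot.
    + rewrite halt_rule_instance. intros B [HB|[HB|[]]]; [discriminate|].
      injection HB as <-. exact Heval.
Qed.

Lemma not_halts_stable_model c n :
  ~ halts c n ->
  stable_model (reduction_program c n) (least_model_reduct (reduction_program c n) (fun _ => False)).
Proof.
  intros Hnot. apply stable_least_model_of_positive_part.
  intros gr B [r [s [[<-|Hr] [_ ->]]]] HB HM0.
  - rewrite halt_rule_instance in HB. destruct HB as [HB|[HB|[]]]; [|discriminate]. injection HB as <-.
    apply Hnot, (HM0 _ (reduction_program_sound c n (fun _ => False))). reflexivity.
  - exact (interpreter_body_positive r s B Hr HB).
Qed.

Lemma halts_iff_entails_falsum c n : halts c n <-> skeptically_entails (reduction_program c n) falsum.
Proof.
  split.
  - intros Hhalt M HM. exfalso. exact (halts_no_stable_model c n M Hhalt HM).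
  - intros Hent. apply NNPP. intros Hnot.
    destruct (Hent _ (not_halts_stable_model c n Hnot)) as [Ha Hna]. exact (Hna Ha).
Qed.

(** * Computability of the reduction *)

Definition succ_code (a : mu_rec) : mu_rec := MComp MSucc [a].

Lemma eval_succ_code a v x : eval a v x -> eval (succ_code a) v (S x).
Proof. intros Ha. econstructor; [repeat constructor; exact Ha | constructor]. Qed.

Fixpoint const_code (k : nat) : mu_rec :=
  match k with 0 => MZero | S k => succ_code (const_code k) end.

Lemma eval_const_code k v : eval (const_code k) v k.
Proof. induction k; [constructor | apply eval_succ_code, IHk]. Qed.

Definition add_code : mu_rec := MRec (MProj 0) (succ_code (MProj 1)).

Lemma eval_add_code x y v : eval add_code (x :: y :: v) (x + y).
Proof.
  induction x.
  - constructor. constructor.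
  - eapply ev_recS; [exact IHx|]. apply eval_succ_code. constructor.
Qed.

Definition triangle_code : mu_rec := MRec MZero (MComp add_code [succ_code (MProj 0); MProj 1]).

Lemma triangle_succ x : S x * (S x + 1) / 2 = S x + x * (x + 1) / 2.
Proof.
  replace (S x * (S x + 1)) with (S x * 2 + x * (x + 1)) by lia.
  apply Nat.div_add_l. discriminate.
Qed.

Lemma eval_triangle_code x v : eval triangle_code (x :: v) (x * (x + 1) / 2).
Proof.
  induction x.
  - constructor. constructor.
  - eapply ev_recS; [exact IHx|]. rewrite triangle_succ. econstructor.
    + constructor; [apply eval_succ_code; constructor | repeat constructor].
    + apply eval_add_code.
Qed.

Definition cpair_code : mu_rec :=
  MComp add_code [MComp triangle_code [MComp add_code [MProj 0; MProj 1]]; MProj 1].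

Lemma eval_cpair_code x y v : eval cpair_code (x :: y :: v) (cpair x y).
Proof.
  econstructor; [|apply eval_add_code].
  constructor; [|repeat constructor].
  econstructor; [|apply eval_triangle_code].
  constructor; [|constructor].
  econstructor; [|apply eval_add_code].
  repeat constructor.
Qed.

Definition pair_code (a b : mu_rec) : mu_rec := MComp cpair_code [a; b].

Lemma eval_pair_code a b v x y : eval a v x -> eval b v y -> eval (pair_code a b) v (cpair x y).
Proof. intros Ha Hb. econstructor; [repeat constructor; eauto | apply eval_cpair_code]. Qed.

(* [enc_term (t_succ t) = cpair 1 (cpair 1 (S (cpair (enc_term t) 0)))] *)
Definition num_code : mu_rec :=
  MRec (const_code (enc_term t_zero))
    (pair_code (const_code 1)
       (pair_code (const_code 1) (succ_code (pair_code (MProj 1) (const_code 0))))).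

Lemma eval_num_code n w : eval num_code (n :: w) (enc_term (num_term n)).
Proof.
  induction n.
  - constructor. apply eval_const_code.
  - eapply ev_recS; [exact IHn|].
    apply eval_pair_code; [apply eval_const_code|].
    apply eval_pair_code; [apply eval_const_code|].
    apply eval_succ_code, eval_pair_code; [apply (ev_proj 1) | apply eval_const_code].
Qed.

Fixpoint list_code {X} (h : X -> mu_rec) (l : list X) : mu_rec :=
  match l with [] => MZero | x :: l' => succ_code (pair_code (h x) (list_code h l')) end.

Lemma eval_list_code {X} (h : X -> mu_rec) (g : X -> nat) l v :
  (forall x, In x l -> eval (h x) v (g x)) -> eval (list_code h l) v (enc_list (map g l)).
Proof.
  induction l as [|x l IH]; intros H; simpl.
  - constructor.
  - apply eval_succ_code, eval_pair_code; [apply H; left; reflexivity|].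
    apply IH. intros y Hy. apply H. right; exact Hy.
Qed.

(* The halting rule only uses the variables 0 and 1, so variable 2 can stand for the input. *)
Definition input_var : nat := 2.

Definition fill_input (n : nat) (x : nat) : term := if x =? input_var then num_term n else Var x.

Fixpoint term_code (t : term) : mu_rec :=
  match t with
  | Var x => if x =? input_var then num_code else const_code (cpair 0 x)
  | Fun f ts => pair_code (const_code 1) (pair_code (const_code f) (list_code term_code ts))
  end.

Lemma eval_term_code t n w : eval (term_code t) (n :: w) (enc_term (subst_term (fill_input n) t)).
Proof.
  induction t as [x|f ts IH] using term_nested_ind.
  - simpl. unfold fill_input. destruct (x =? input_var); [apply eval_num_code | apply eval_const_code].
  - cbn [term_code subst_term enc_term].
    apply eval_pair_code; [apply eval_const_code|]. apply eval_pair_code; [apply eval_const_code|].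
    rewrite map_map. apply eval_list_code. rewrite Forall_forall in IH. exact IH.
Qed.

Definition atom_code (a : atom) : mu_rec :=
  pair_code (const_code (apred a)) (list_code term_code (aargs a)).

Lemma eval_atom_code a n w : eval (atom_code a) (n :: w) (enc_atom (subst_atom (fill_input n) a)).
Proof.
  apply eval_pair_code; [apply eval_const_code|]. cbn. rewrite map_map.
  apply eval_list_code. intros; apply eval_term_code.
Qed.

Definition literal_code (l : literal) : mu_rec :=
  match l with
  | Pos a => pair_code (const_code 0) (atom_code a)
  | Neg a => pair_code (const_code 1) (atom_code a)
  end.

Lemma eval_literal_code l n w : eval (literal_code l) (n :: w) (enc_lit (subst_lit (fill_input n) l)).
Proof. destruct l; apply eval_pair_code; auto using eval_const_code, eval_atom_code. Qed.

Definition rule_code (r : rule) : mu_rec :=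
  pair_code (atom_code (rhead r)) (list_code literal_code (rbody r)).

Lemma eval_rule_code r n w : eval (rule_code r) (n :: w) (enc_rule (subst_rule (fill_input n) r)).
Proof.
  apply eval_pair_code; [apply eval_atom_code|]. cbn. rewrite map_map.
  apply eval_list_code. intros; apply eval_literal_code.
Qed.

Lemma fill_input_halt_rule c n :
  subst_rule (fill_input n) (halt_rule_at (code_term c) (Var input_var)) =
  halt_rule_at (code_term c) (num_term n).
Proof. unfold halt_rule_at, subst_rule, subst_lit, subst_atom. cbn. now rewrite subst_code_term. Qed.

Definition reduction_code (c : mu_rec) : mu_rec :=
  pair_code
    (succ_code (pair_code (rule_code (halt_rule_at (code_term c) (Var input_var)))
                          (const_code (enc_program interpreter))))
    (const_code (enc_formula falsum)).

Lemma eval_reduction_code c n :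
  eval (reduction_code c) [n] (enc_instance (reduction_program c n, falsum)).
Proof.
  apply eval_pair_code; [|apply eval_const_code].
  apply eval_succ_code, eval_pair_code; [|apply eval_const_code].
  rewrite <- fill_input_halt_rule. apply eval_rule_code.
Qed.

Lemma reduction_program_correct c n : halts c n <-> FR_skeptical (reduction_program c n, falsum).
Proof.
  rewrite halts_iff_entails_falsum. unfold FR_skeptical. cbn [fst snd].
  split; [|tauto]. intros Hent.
  split; [apply reduction_program_finitely_recursive|]. split; [split; intros t []|exact Hent].
Qed.

Theorem theorem5p5 :
  forall A : nat -> Prop, re_set A -> many_one_reducible A FR_skeptical.
Proof.
  intros A [c Hc]. exists (fun n => (reduction_program c n, falsum)). split.
  - exists (reduction_code c). apply eval_reduction_code.
  - intros n. rewrite Hc. apply reduction_program_correct.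
Qed.
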